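(* Let $\mathfrak L=(V,E,\lambda,\iota)$ be a $\lambda$-graph system presenting a subshift $\Lambda$. If $\mathfrak L$ is $\lambda$-irreducible then $\mathfrak L$ is $\iota$-irreducible, and if $\mathfrak L$ is $\iota$-irreducible then $\Lambda$ is irreducible.
   Context: A $\lambda$-graph system over a finite alphabet $\Sigma$ is $\mathfrak L=(V,E,\lambda,\iota)$ where $V=\bigsqcup_{l\ge0}V_l$ with $V_l$ finite, $E=\bigsqcup_{l\ge0}E_{l,l+1}$ with each $e\in E_{l,l+1}$ having source $s(e)\in V_l$ and terminal $t(e)\in V_{l+1}$, $\lambda:E\to\Sigma$ a labeling, $\iota:V_{l+1}\to V_l$ surjections, every vertex has an outgoing edge and every vertex of $V_{l+1}$ an incoming edge, and (local property) for $u\in V_{l-1}$, $v\in V_{l+1}$ there is a label-preserving bijection between $\{e\in E_{l,l+1}:t(e)=v,\ \iota(s(e))=u\}$ and $\{e\in E_{l-1,l}:s(e)=u,\ t(e)=\iota(v)\}$. A labeled path is a finite sequence of consecutive edges $e_1,\dots,e_n$ with $e_i\in E_{k+i-1,k+i}$ and $t(e_i)=s(e_{i+1})$; its label is $(\lambda(e_1),\dots,\lambda(e_n))$. The presented subshift $\Lambda$ is the subshift whose admissible words are the labels of labeled paths; a subshift is irreducible if for admissible $\mu,\nu$ there is $\eta$ with $\mu\eta\nu$ admissible. $\iota^n$ denotes the $n$-fold composition of the maps $\iota$. $\mathfrak L$ is $\iota$-irreducible if for any $u,v\in V_l$ and any labeled path $\gamma$ leaving $u$ there exist $n$, a labeled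 path $\eta$ of length $n$ leaving $v$ with $\iota^n(t(\eta))=u$, and a labeled path $\gamma'$ leaving $t(\eta)$ with $\iota^n(t(\gamma'))=t(\gamma)$ and $\lambda(\gamma')=\lambda(\gamma)$. $\mathfrak L$ is $\lambda$-irreducible if for any ordered pair $u,v\in V_l$ there is $L(u,v)\in\mathbb N$ such that for every $w\in V_{l+L(u,v)}$ with $\iota^{L(u,v)}(w)=u$ there is a labeled path $\gamma$ with $s(\gamma)=v$, $t(\gamma)=w$. *)

From mathcomp Require Import all_boot.
Set Implicit Arguments. Unset Strict Implicit. Unset Printing Implicit Defensive.

(* V l   : the finite vertex set V_l,
   E l   : the finite edge set E_{l,l+1},
   src l : E_{l,l+1} -> V_l,  trm l : E_{l,l+1} -> V_{l+1},
   lab l : E_{l,l+1} -> Sigma, iota l : V_{l+1} -> V_l.           *)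
Record lgs (Sigma : finType) := LGS {
  V : nat -> finType;
  E : nat -> finType;
  src : forall l, E l -> V l;
  trm : forall l, E l -> V l.+1;
  lab : forall l, E l -> Sigma;
  iota : forall l, V l.+1 -> V l;
  iota_surj : forall l (u : V l), exists v : V l.+1, iota v = u;
  out_edge : forall l (u : V l), exists e : E l, src e = u;
  in_edge : forall l (v : V l.+1), exists e : E l, trm e = v;
  (* local property, stated for l+1 in place of l: u in V_l, v in V_{l+2} *)
  local_prop : forall l (u : V l) (v : V l.+2),
    exists f : {e : E l.+1 | trm e = v /\ iota (src e) = u} ->
               {e : E l | src e = u /\ trm e = iota v},
      bijective f /\ forall x, lab (proj1_sig (f x)) = lab (proj1_sig x)
}.

Section Paths.
Variables (Sigma : finType) (L : lgs Sigma).

Definition VS := {l : nat & V L l}.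
Definition ES := {l : nat & E L l}.
Definition vx l (v : V L l) : VS := existT _ l v.
Definition esrc (e : ES) : VS := existT _ (tag e) (src (tagged e)).
Definition etrm (e : ES) : VS := existT _ (tag e).+1 (trm (tagged e)).
Definition elab (e : ES) : Sigma := lab (tagged e).

Fixpoint is_path (x : VS) (p : seq ES) : Prop :=
  match p with
  | [::] => True
  | e :: p' => esrc e = x /\ is_path (etrm e) p'
  end.

Fixpoint pend (x : VS) (p : seq ES) : VS :=
  match p with
  | [::] => x
  | e :: p' => pend (etrm e) p'
  end.

Definition plabel (p : seq ES) : seq Sigma := map elab p.

Unset Implicit Arguments.
Fixpoint iotan (n l : nat) : V L (n + l) -> V L l :=
  match n return V L (n + l) -> V L l with
  | 0 => fun w => w
  | n'.+1 => fun w => iotan n' l (@iota _ L (n' + l) w)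
  end.
Set Implicit Arguments.

Definition admissible (w : seq Sigma) : Prop :=
  exists x p, is_path x p /\ plabel p = w.

Definition subshift_irreducible : Prop :=
  forall mu nu, admissible mu -> admissible nu ->
    exists eta, admissible (mu ++ eta ++ nu).

Definition iota_irreducible : Prop :=
  forall l (u v : V L l) (g : seq ES), is_path (vx u) g ->
    exists n (eta : seq ES) (w : V L (n + l)),
      [/\ is_path (vx v) eta, size eta = n, pend (vx v) eta = vx w,
          iotan n l w = u &
          exists g' : seq ES, exists z : V L (n + (size g + l)),
            [/\ is_path (vx w) g', plabel g' = plabel g,
                pend (vx w) g' = vx z &
                vx (iotan n (size g + l) z) = pend (vx u) g]].

Definition lambda_irreducible : Prop :=
  forall l (u v : V L l), exists Luv : nat,
    forall w : V L (Luv + l), iotan Luv l w = u ->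
      exists g : seq ES, is_path (vx v) g /\ pend (vx v) g = vx w.

End Paths.

From Stdlib Require Import Eqdep_dec PeanoNat.
From mathcomp Require Import all_boot.
Set Implicit Arguments. Unset Strict Implicit.

(* The local property lets a labeled path be lifted one level up, backwards
   from any vertex above its terminal vertex, keeping its label; iterating,
   a path lifts along iota^n to end at any prescribed vertex n levels above
   its end.  Given lambda-irreducibility, lift gamma so that it ends at an
   arbitrary vertex over t(gamma) at level l + L(u,v); its lifted source lies
   over u, and lambda-irreducibility provides the connecting path eta from v.
   Given iota-irreducibility, two admissible words are first realised by
   paths lifted so that the first ends at the level where the second starts;
   iota-irreducibility then connects them. *)

Section LambdaGraphPaths.
Variables (Sigma : finType) (L : lgs Sigma).

Lemma vx_inj k (a b : V L k) : vx a = vx b -> a = b.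
Proof. exact: inj_pair2_eq_dec Nat.eq_dec _ _ _ _. Qed.

Lemma tag_pend (x : VS L) p : is_path x p -> tag (pend x p) = size p + tag x.
Proof.
elim: p x => [|e p IHp] x //= [<- Hp].
by rewrite IHp //= addnS.
Qed.

Lemma is_path_cat (x : VS L) p q :
  is_path x (p ++ q) <-> is_path x p /\ is_path (pend x p) q.
Proof.
elim: p x => [|e p IHp] x /=; first by split=> // -[].
by rewrite IHp; split=> [[-> []] | [[-> ?] ?]].
Qed.

Lemma iotan_surj n l (u : V L l) : exists w : V L (n + l), iotan _ L n l w = u.
Proof.
elim: n => [|n [w <-]]; first by exists u.
by have [w' <-] := iota_surj w; exists w'.
Qed.

Lemma lift_path_iota p k (x : V L k) m (y : V L m.+1) :
  is_path (vx x) p -> pend (vx x) p = vx (iota y) ->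
  exists (x' : V L k.+1) p',
    [/\ iota x' = x, is_path (vx x') p', plabel p' = plabel p
      & pend (vx x') p' = vx y].
Proof.
elim: p k x => [|[l e] p IHp] k x /=.
  move=> _ Hxy; have Hkm : k = m := f_equal (@projT1 _ _) Hxy; subst m.
  by exists y, [::]; rewrite (vx_inj Hxy).
rewrite /esrc /etrm /=; case=> Hsrc Hp Hend.
have Hl : l = k := f_equal (@projT1 _ _) Hsrc; subst l.
have {}Hsrc := vx_inj Hsrc.
have [x1 [p1 [Hx1 Hp1 Hlab1 Hend1]]] := IHp _ _ Hp Hend.
have [f [[g _ gK] f_lab]] := local_prop x x1.
(* e is an edge from x to iota x1: the bijection of the local property
   pulls it back to an edge into x1 whose source lies over x. *)
pose c : {e : E L k | src e = x /\ trm e = iota x1} :=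
  exist _ e (conj Hsrc (esym Hx1)).
have := f_lab (g c); rewrite gK /=.
case: (g c) => [e' [Htrm Hiota]] /= Hlab.
exists (src e'), (existT _ k.+1 e' :: p1); split=> //=.
- by rewrite /etrm /= Htrm.
- by move: Hlab1; rewrite /plabel /= => ->; rewrite /elab /= Hlab.
- by rewrite /etrm /= Htrm.
Qed.

Lemma lift_path_iotan n k m (x : V L k) p (y : V L (n + m)) :
  is_path (vx x) p -> pend (vx x) p = vx (iotan _ L n m y) ->
  exists (x' : V L (n + k)) p',
    [/\ iotan _ L n k x' = x, is_path (vx x') p', plabel p' = plabel p
      & pend (vx x') p' = vx y].
Proof.
elim: n y => [|n IHn] y Hp Hend; first by exists x, p.
have [x1 [p1 [<- Hp1 <- Hend1]]] := IHn (iota y) Hp Hend.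
have [x' [p' [<- Hp' <- Hend']]] := lift_path_iota Hp1 Hend1.
by exists x', p'.
Qed.

Lemma lift_path n k (x : V L k) p : is_path (vx x) p ->
  exists (x' : V L (n + k)) p', is_path (vx x') p' /\ plabel p' = plabel p.
Proof.
move=> Hp; move: (tag_pend Hp).
case Hend: (pend (vx x) p) => [m y] /= Hm; subst m.
have [z Hz] := iotan_surj n y.
have [x' [p' [_ Hp' Hlab _]]] := lift_path_iotan Hp (etrans Hend (congr1 _ (esym Hz))).
by exists x', p'.
Qed.

Lemma lambda_irreducible_iota_irreducible :
  lambda_irreducible L -> iota_irreducible L.
Proof.
move=> Hlam l u v g Hg.
have [N HN] := Hlam l u v.
move: (tag_pend Hg); case Hend: (pend (vx u) g) => [m y] /= Hm; subst m.
have [z Hz] := iotan_surj N y.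
have [w [g' [Hw Hg' Hlab Hend']]] :=
  lift_path_iotan Hg (etrans Hend (congr1 _ (esym Hz))).
have [eta [Heta Heta_end]] := HN w Hw.
exists N, eta, w; split=> //; last by exists g', z; rewrite Hz.
have := tag_pend Heta; rewrite Heta_end /= => Hlevel.
by apply/eqP; rewrite -(eqn_add2r l) Hlevel.
Qed.

Lemma iota_irreducible_join (x y : VS L) p q :
  iota_irreducible L -> is_path x p -> is_path y q -> tag (pend x p) = tag y ->
  exists eta, admissible L (plabel p ++ eta ++ plabel q).
Proof.
case Hend: (pend x p) => [k a]; case: y => [k' b] Hio Hp Hq /= Hk; subst k'.
have [n [eta [w [Heta _ Heta_end _ [q' [_ [Hq' Hlab _ _]]]]]]] := Hio k b a q Hq.
exists (plabel eta), x, (p ++ eta ++ q'); split.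
- by rewrite !is_path_cat Hend Heta_end.
- by rewrite /plabel !map_cat -/(plabel q') Hlab.
Qed.

Lemma iota_irreducible_subshift_irreducible :
  iota_irreducible L -> subshift_irreducible L.
Proof.
move=> Hio _ _ [[l1 x] [p [Hp <-]]] [[l2 y] [q [Hq <-]]].
(* Lift p by (l2 - d) and q by (d - l2), d the terminal level of p: both
   then meet at level maxn d l2. *)
pose d := size p + l1.
have [x' [p' [Hp' Hlab_p]]] := lift_path (l2 - d) Hp.
have [y' [q' [Hq' <-]]] := lift_path (d - l2) Hq.
rewrite -Hlab_p; apply: (iota_irreducible_join Hio Hp' Hq').
have := congr1 size Hlab_p; rewrite /plabel !size_map => Hsize.
by rewrite (tag_pend Hp') /= Hsize addnCA -/d addnC -maxnE maxnC maxnE addnC.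
Qed.

End LambdaGraphPaths.

Theorem lemma2p6 (Sigma : finType) (L : lgs Sigma) :
  (lambda_irreducible L -> iota_irreducible L) /\
  (iota_irreducible L -> subshift_irreducible L).
Proof.
split.
- exact: lambda_irreducible_iota_irreducible.
- exact: iota_irreducible_subshift_irreducible.
Qed.
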